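(* Let $H$ be a set of $n$ objects with an associated decomposition scheme of combinatorial dimension $b$ that complies with the Clarkson–Shor framework. Assume its local growth function satisfies $u(m)\le 2^\alpha m^\beta$ for all $m$, for some real $\alpha$ and some $\beta\ge 1$. Let $R$ be a $\rho$-sample from $H$ with $\rho\ge 4b$, and let $\ell>1$. Let $\mathcal{CD}_{\ge \ell}(R)$ denote the set of $\ell$-heavy cells of $\mathcal{CD}(R)$. Then $$\mathbb{E}\bigl[\,|\mathcal{CD}_{\ge\ell}(R)|\,\bigr]\ \le\ 3^b\,2^{\alpha-\beta}\rho^\beta e^{-\ell/2}.$$
   Context: Clarkson–Shor framework. $H$ is a finite set of objects embedded in some space $E$. Every subset $I\subseteq H$ determines a set $\mathcal{CD}(I)$ of cells, which are subsets of $E$. Combinatorial dimension: there is an integer $b>0$ such that for every $I\subseteq H$ and every $\sigma\in\mathcal{CD}(I)$ there is $J\subseteq I$ with $|J|\le b$ and $\sigma\in\mathcal{CD}(J)$. A smallest such $J$ is a defining set $D(\sigma)$ of $\sigma$; it need not be unique, and any choice may be used. The least such $b$ is the combinatorial dimension. Conflict list: an object $f\in H$ conflicts with $\sigma$ if $\sigma\notin\mathcal{CD}(D(\sigma)\cup\{f\})$. The conflict list $K(\sigma)$ is the set of objects of $H$ that conflict with $\sigma$; always $D(\sigma)\cap K(\sigma)=\emptyset$. Compliance with the framework means both axioms hold: (i) for every $R\subseteq H$ and every $\sigma\in\mathcal{CD}(R)$, some defining set $D(\sigma)$ satisfies $D(\sigma)\subseteq R$, and $K(\sigma)\cap R=\emptyset$;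 (ii) for every $R\subseteq H$, if $D(\sigma)\subseteq R$ for some defining set of $\sigma$ and $K(\sigma)\cap R=\emptyset$, then $\sigma\in\mathcal{CD}(R)$. Local growth function: $u(m)=\max_{I\subseteq H,\,|I|=m}|\mathcal{CD}(I)|$. A $\rho$-sample is the set of elements obtained by $\rho$ independent uniform draws from $H$, with repetition. For a fixed $\rho$, a cell $\sigma$ is $\ell$-heavy if $|K(\sigma)|\ge \ell n/\rho$, where $n=|H|$. *)

From Stdlib Require Import Reals.
From mathcomp Require Import all_boot.

Set Implicit Arguments.
Unset Strict Implicit.
Unset Printing Implicit Defensive.

Local Open Scope R_scope.

(* H : finite type of objects; C : type of (all possible) cells;
   CD I : the set of cells determined by I ⊆ H. *)

Definition is_defining_set (H C : finType) (CD : {set H} -> {set C})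
    (s : C) (J : {set H}) : Prop :=
  s \in CD J /\ (forall J' : {set H}, s \in CD J' -> (#|J| <= #|J'|)%N).

Definition dim_bound (H C : finType) (CD : {set H} -> {set C}) (b : nat) : Prop :=
  forall (I : {set H}) (s : C), s \in CD I ->
    exists J : {set H}, [/\ J \subset I, (#|J| <= b)%N & s \in CD J].

Definition comb_dim (H C : finType) (CD : {set H} -> {set C}) (b : nat) : Prop :=
  [/\ (0 < b)%N, dim_bound CD b &
      forall b', (0 < b')%N -> dim_bound CD b' -> (b <= b')%N].

Definition conflict_list (H C : finType) (CD : {set H} -> {set C})
    (D : C -> {set H}) (s : C) : {set H} :=
  [set f | s \notin CD (D s :|: [set f])].

Definition complies (H C : finType) (CD : {set H} -> {set C})
    (D : C -> {set H}) : Prop :=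
  (forall (S : {set H}) (s : C), s \in CD S ->
     (exists J, is_defining_set CD s J /\ J \subset S) /\
     [disjoint conflict_list CD D s & S]) /\
  (forall (S : {set H}) (s : C),
     (exists J, is_defining_set CD s J /\ J \subset S) ->
     [disjoint conflict_list CD D s & S] -> s \in CD S).

Definition local_growth (H C : finType) (CD : {set H} -> {set C}) (m : nat) : nat :=
  \max_(I : {set H} | #|I| == m) #|CD I|.

(* x^y for x >= 0 real, with the convention 0^y = 0 (y > 0). *)
Definition rpow0 (x y : R) : R :=
  if Req_EM_T x 0 then 0 else Rpower x y.

Definition heavy_cells (H C : finType) (CD : {set H} -> {set C})
    (D : C -> {set H}) (rho : nat) (l : R) (S : {set H}) : {set C} :=
  [set s in CD S |
     if Rle_dec (l * INR (#|H|) / INR rho) (INR (#|conflict_list CD D s|))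
     then true else false].

(* The set of elements of a rho-sample (rho independent uniform draws). *)
Definition sample_set (H : finType) (rho : nat) (t : {ffun 'I_rho -> H}) : {set H} :=
  [set x | x \in codom t].

Definition expected_heavy (H C : finType) (CD : {set H} -> {set C})
    (D : C -> {set H}) (rho : nat) (l : R) : R :=
  (INR (\sum_(t : {ffun 'I_rho -> H}) #|heavy_cells CD D rho l (sample_set t)|)
   / INR (#|H| ^ rho)%N).

From Stdlib Require Import Reals Lra.
From mathcomp Require Import all_boot zify.

Set Implicit Arguments.
Unset Strict Implicit.
Unset Printing Implicit Defensive.

(* Fix a cell s and let N_m be the number of sequences of m draws whose sample
   determines s.  In a sequence of m+1 draws counted by N_{m+1}, all but at most
   b draws (one occurrence of each element of a defining set) can be deleted
   without losing s, and by compliance the deleted draw lies outside K(s).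
   Double counting gives (m+1-b) N_{m+1} <= (m+1) (n - |K(s)|) N_m.  Iterating
   from t = rho/2 up to rho, and using rho^_b <= 3^b t^_b for rho >= 4b, yields
   N_rho <= 3^b (n - |K(s)|)^(rho - t) N_t, where (1 - |K(s)|/n)^(rho - t) is at
   most e^(-l/2) for an l-heavy cell.  Finally
   sum_s N_t = sum_y |CD(sample y)| <= n^t u(t) <= n^t 2^(alpha-beta) rho^beta. *)

Lemma sum_card_exchange (I J : finType) (F : I -> J -> bool) :
  \sum_(i : I) #|[set j | F i j]| = \sum_(j : J) #|[set i | F i j]|.
Proof.
have card_sum (T : finType) (A : {set T}) : #|A| = \sum_(x : T) (x \in A).
  by rewrite -sum1_card big_mkcond; apply: eq_bigr => x _; case: (x \in A).
under eq_bigr => i _ do rewrite card_sum.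
rewrite exchange_big; apply: eq_bigr => j _; rewrite card_sum.
by apply: eq_bigr => i _; rewrite !inE.
Qed.

Lemma ffact_le_exp3_half r c : 4 * c <= r -> r ^_ c <= 3 ^ c * (r %/ 2) ^_ c.
Proof.
elim: c => [|c IH] h; first by rewrite !ffactn0.
have IH' := IH ltac:(lia).
have h2 : r - c <= 3 * (r %/ 2 - c) by lia.
rewrite !ffactnSr expnS; have := leq_mul IH' h2; lia.
Qed.

Section Draws.
Variable H : finType.

Definition drop_draw m (i : 'I_m.+1) (x : {ffun 'I_m.+1 -> H}) : {ffun 'I_m -> H} :=
  [ffun j => x (lift i j)].

Definition insert_draw m (i : 'I_m.+1) (p : {ffun 'I_m -> H} * H) : {ffun 'I_m.+1 -> H} :=
  [ffun j => if unlift i j is Some j' then p.1 j' else p.2].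

Lemma drop_insert_draw m (i : 'I_m.+1) p : drop_draw i (insert_draw i p) = p.1.
Proof. by apply/ffunP => j; rewrite !ffunE liftK. Qed.

Lemma insert_draw_at m (i : 'I_m.+1) p : insert_draw i p i = p.2.
Proof. by rewrite ffunE unlift_none. Qed.

Lemma insert_drop_draw m (i : 'I_m.+1) x : insert_draw i (drop_draw i x, x i) = x.
Proof.
apply/ffunP => j; rewrite ffunE /=.
case: (eqVneq i j) => [->|nij]; first by rewrite unlift_none.
by have [j' -> ->] := unlift_some nij; rewrite ffunE.
Qed.

Lemma insert_draw_inj m (i : 'I_m.+1) : injective (insert_draw i).
Proof.
move=> [y h] [y' h'] e.
have := congr1 (drop_draw i) e; have := congr1 (fun x : {ffun 'I_m.+1 -> H} => x i) e.
by rewrite !drop_insert_draw !insert_draw_at /= => -> ->.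
Qed.

Lemma card_drop_draw m (i : 'I_m.+1) (P : pred {ffun 'I_m -> H}) (A : {set H}) :
  #|[set x : {ffun 'I_m.+1 -> H} | P (drop_draw i x) && (x i \in A)]|
  = #|[set y | P y]| * #|A|.
Proof.
have -> : [set x : {ffun 'I_m.+1 -> H} | P (drop_draw i x) && (x i \in A)]
          = insert_draw i @: setX [set y | P y] A.
  apply/setP => x; rewrite inE; apply/idP/imsetP.
  - by move=> /andP[Px xA]; exists (drop_draw i x, x i); rewrite ?insert_drop_draw ?inE ?Px.
  - case=> [[y h]]; rewrite !inE /= => /andP[Py hA] ->.
    by rewrite drop_insert_draw insert_draw_at Py hA.
by rewrite card_imset ?cardsX //; exact: insert_draw_inj.
Qed.

Lemma sample_set_drop_draw m (i : 'I_m.+1) x :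
  sample_set (drop_draw i x) \subset sample_set x.
Proof.
by apply/subsetP => h; rewrite !inE => /codomP [j ->]; rewrite ffunE codom_f.
Qed.

Lemma card_sample_set m (x : {ffun 'I_m -> H}) : #|sample_set x| <= m.
Proof.
have -> : #|sample_set x| = #|codom x| by apply: eq_card => h; rewrite inE.
by apply: leq_trans (card_size _) _; rewrite size_codom card_ord.
Qed.

Definition picked_draws m (x : {ffun 'I_m -> H}) (A : {set H}) : {set 'I_m} :=
  [set i | (x i \in A) && ([pick j | x j == x i] == Some i)].

Lemma card_picked_draws m (x : {ffun 'I_m -> H}) (A : {set H}) : #|picked_draws x A| <= #|A|.
Proof.
rewrite -(@card_in_imset _ _ x (picked_draws x A)).
  by apply: subset_leq_card; apply/subsetP => h /imsetP [i]; rewrite inE => /andP[? _] ->.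
move=> i1 i2; rewrite !inE => /andP[_ /eqP e1] /andP[_ /eqP e2] e.
by rewrite e e2 in e1; case: e1.
Qed.

Lemma sub_sample_drop_draw m (i : 'I_m.+1) (x : {ffun 'I_m.+1 -> H}) (A : {set H}) :
  A \subset sample_set x -> i \notin picked_draws x A ->
  A \subset sample_set (drop_draw i x).
Proof.
move=> sAx hi; apply/subsetP => h hA.
have [j0 ej0] : exists j0, h = x j0 by move: (subsetP sAx h hA); rewrite inE => /codomP.
have [j1 hj1 Ep] : exists2 j1, x j1 = h & [pick j | x j == h] = Some j1.
  by case: pickP => [j1 /eqP|/(_ j0)]; [exists j1 | rewrite -ej0 eqxx].
have nij : i != j1.
  by apply: contraNneq hi => ->; rewrite inE hj1 hA Ep eqxx.
have [j' ej' _] := unlift_some nij.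
by rewrite inE; apply/codomP; exists j'; rewrite ffunE -ej' hj1.
Qed.

End Draws.

Lemma defining_set_card_le (H C : finType) (CD : {set H} -> {set C}) b s (J : {set H}) :
  dim_bound CD b -> is_defining_set CD s J -> #|J| <= b.
Proof.
move=> hdim [sJ minJ]; have [J' [_ J'b sJ']] := hdim _ _ sJ.
exact: leq_trans (minJ _ sJ') J'b.
Qed.

Section Compliance.
Variables (H C : finType) (CD : {set H} -> {set C}) (D : C -> {set H}).
Hypothesis Hcomp : complies CD D.

Lemma conflict_notin s (S : {set H}) h :
  s \in CD S -> h \in S -> h \notin conflict_list CD D s.
Proof. by move=> sS hS; have [_ dis] := Hcomp.1 _ _ sS; rewrite (disjointFl dis hS). Qed.

Lemma in_CD_subset s (J S S' : {set H}) : s \in CD S -> is_defining_set CD s J ->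
  J \subset S' -> S' \subset S -> s \in CD S'.
Proof.
move=> sS defJ JS' S'S; apply: Hcomp.2; first by exists J.
by have [_ dis] := Hcomp.1 _ _ sS; exact: disjointWr dis.
Qed.

End Compliance.

Definition sample_hits (H C : finType) (CD : {set H} -> {set C}) (s : C) m :=
  #|[set x : {ffun 'I_m -> H} | s \in CD (sample_set x)]|.

Section SampleHits.
Variables (H C : finType) (CD : {set H} -> {set C}) (D : C -> {set H}) (b : nat).
Hypothesis Hdim : dim_bound CD b.
Hypothesis Hcomp : complies CD D.
Variable s : C.
Local Notation K := (conflict_list CD D s).
Local Notation N := (sample_hits CD s).

Definition removable_draws m (x : {ffun 'I_m.+1 -> H}) : {set 'I_m.+1} :=
  [set i | (s \in CD (sample_set (drop_draw i x))) && (x i \notin K)].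

Lemma card_removable_draws m (x : {ffun 'I_m.+1 -> H}) :
  s \in CD (sample_set x) -> m.+1 - b <= #|removable_draws x|.
Proof.
move=> sx; have [[J [defJ Jx]] _] := Hcomp.1 _ _ sx.
have Jb := defining_set_card_le Hdim defJ.
have sub : ~: picked_draws x J \subset removable_draws x.
  apply/subsetP => i; rewrite in_setC => hi; rewrite inE; apply/andP; split.
    apply: (in_CD_subset Hcomp sx defJ); last exact: sample_set_drop_draw.
    exact: sub_sample_drop_draw.
  by apply: (conflict_notin Hcomp sx); rewrite inE codom_f.
have := subset_leq_card sub; have := cardsC (picked_draws x J).
have := card_picked_draws x J; rewrite card_ord; lia.
Qed.

Lemma card_removable_at m (i : 'I_m.+1) :
  #|[set x : {ffun 'I_m.+1 -> H} | i \in removable_draws x]| = N m * (#|H| - #|K|).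
Proof.
have -> : [set x : {ffun 'I_m.+1 -> H} | i \in removable_draws x]
    = [set x | (s \in CD (sample_set (drop_draw i x))) && (x i \in ~: K)].
  by apply/setP => x; rewrite !inE.
by rewrite (card_drop_draw i (fun y => s \in CD (sample_set y))) -(cardsC K) addKn.
Qed.

Lemma sample_hits_succ m : (m.+1 - b) * N m.+1 <= m.+1 * (N m * (#|H| - #|K|)).
Proof.
rewrite /sample_hits mulnC -sum_nat_const.
apply: (@leq_trans (\sum_(x : {ffun 'I_m.+1 -> H}) #|removable_draws x|)).
  rewrite [X in X <= _]big_mkcond; apply: leq_sum => x _.
  by rewrite inE; case: ifP => // sx; exact: card_removable_draws.
rewrite (eq_bigr (fun x => #|[set i | i \in removable_draws x]|)); last first.
  by move=> x _; apply: eq_card => i; rewrite inE.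
rewrite (sum_card_exchange (fun x i => i \in removable_draws x)).
under eq_bigr => i _ do rewrite card_removable_at.
by rewrite sum_nat_const card_ord.
Qed.

Lemma sample_hits_iter t k : b <= t ->
  t ^_ b * N (t + k) <= (t + k) ^_ b * (#|H| - #|K|) ^ k * N t.
Proof.
move=> bt; elim: k => [|k IH]; first by rewrite addn0 expn0 muln1 mulnC.
rewrite addnS; set m := t + k in IH *; set c := #|H| - #|K|.
have pos : 0 < m.+1 - b by rewrite /m; lia.
rewrite -(leq_pmul2l pos).
apply: (@leq_trans (t ^_ b * (m.+1 * (N m * c)))).
  by rewrite mulnCA leq_mul2l sample_hits_succ orbT.
apply: (@leq_trans (m.+1 * c * (m ^_ b * c ^ k * N t))).
  have -> : t ^_ b * (m.+1 * (N m * c)) = m.+1 * c * (t ^_ b * N m) by lia.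
  by rewrite leq_mul2l IH orbT.
have ff : (m.+1 - b) * m.+1 ^_ b = m.+1 * m ^_ b by rewrite mulnC -ffactnSr ffactSS.
rewrite expnS !mulnA ff; apply: eq_leq; lia.
Qed.

Lemma sample_hits_half rho : 4 * b <= rho ->
  N rho <= 3 ^ b * (#|H| - #|K|) ^ (rho - rho %/ 2) * N (rho %/ 2).
Proof.
move=> hr.
have := @sample_hits_iter (rho %/ 2) (rho - rho %/ 2) ltac:(lia).
rewrite subnKC; last lia.
have pos : 0 < (rho %/ 2) ^_ b by rewrite ffact_gt0; lia.
move=> h; rewrite -(leq_pmul2l pos); apply: leq_trans h _.
apply: leq_trans (leq_mul (leq_mul (ffact_le_exp3_half hr) (leqnn _)) (leqnn _)) _.
apply: eq_leq; lia.
Qed.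

End SampleHits.

Local Open Scope R_scope.

Lemma INR_expn m k : INR (m ^ k)%N = INR m ^ k.
Proof. by elim: k => [|k IH]; rewrite ?expn0 // expnS mult_INR IH. Qed.

Lemma INR_subn m k : (k <= m)%N -> INR (m - k)%N = INR m - INR k.
Proof. by move/leP/minus_INR. Qed.

Lemma INR_sum_le (I : finType) (P : pred I) (F G : I -> nat) (c : R) :
  0 <= c -> (forall i, P i -> INR (F i) <= c * INR (G i)) ->
  INR (\sum_(i | P i) F i) <= c * INR (\sum_(i | P i) G i).
Proof.
move=> c0 FG; apply: (big_ind2 (fun a b => INR a <= c * INR b)) => //.
  by rewrite /=; lra.
by move=> a1 b1 a2 b2 h1 h2; rewrite !plus_INR; lra.
Qed.

Lemma exp_le x y : x <= y -> exp x <= exp y.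
Proof. by case=> [/exp_increasing/Rlt_le|->]; [|right]. Qed.

Lemma exp_pow_INR z k : exp z ^ k = exp (INR k * z).
Proof.
elim: k => [|k IH]; first by rewrite /= Rmult_0_l exp_0.
by rewrite S_INR /= IH -exp_plus; congr exp; ring.
Qed.

Lemma pow_one_sub_le_exp z k : z <= 1 -> (1 - z) ^ k <= exp (- (INR k * z)).
Proof.
move=> z1; apply: Rle_trans (_ : exp (- z) ^ k <= _); last first.
  by rewrite exp_pow_INR; right; congr exp; ring.
by apply: pow_incr; have := exp_ineq1_le (- z); lra.
Qed.

Lemma heavy_pow_le_exp (n kappa r l : R) (k : nat) : 0 < n -> 0 <= kappa <= n ->
  0 < r -> l * n / r <= kappa -> r <= 2 * INR k ->
  (n - kappa) ^ k <= n ^ k * exp (- l / 2).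
Proof.
move=> n0 [k0 kn] r0 heavy rk.
have z1 : kappa / n <= 1.
  by apply: (Rmult_le_reg_r n) => //; rewrite Rmult_1_l; have -> : kappa / n * n = kappa by field; lra.
have -> : n - kappa = n * (1 - kappa / n) by field; lra.
rewrite Rpow_mult_distr; apply: Rmult_le_compat_l; first by apply: pow_le; lra.
apply: Rle_trans (@pow_one_sub_le_exp _ k z1) _.
apply: exp_le; suff : l / 2 <= INR k * (kappa / n) by lra.
have lr : l / r <= kappa / n.
  apply: (Rmult_le_reg_r (r * n)); first nra.
  have -> : l / r * (r * n) = l * n / r * r by field; lra.
  have -> : kappa / n * (r * n) = kappa * r by field; lra.
  by apply: Rmult_le_compat_r; lra.
have kn0 : 0 <= kappa / n by apply: Rmult_le_pos; [|apply: Rlt_le; apply: Rinv_0_lt_compat].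
apply: Rle_trans (_ : r / 2 * (kappa / n) <= _); last by apply: Rmult_le_compat_r; lra.
apply: Rle_trans (_ : r / 2 * (l / r) <= _); first by right; field; lra.
by apply: Rmult_le_compat_l; lra.
Qed.

Lemma growth_bound_half alpha beta (m rho : nat) : 1 <= beta -> (0 < rho)%N ->
  (2 * m <= rho)%N ->
  Rpower 2 alpha * rpow0 (INR m) beta <= Rpower 2 (alpha - beta) * Rpower (INR rho) beta.
Proof.
move=> hb hr hm.
have [p1 p2] : 0 < Rpower 2 (alpha - beta) /\ 0 < Rpower (INR rho) beta by split; exact: exp_pos.
rewrite /rpow0; destruct (Req_EM_T (INR m) 0) as [m0|m0]; first by rewrite Rmult_0_r; nra.
have mpos : 0 < INR m by have := pos_INR m; lra.
have rpos : 0 < INR rho by apply: lt_0_INR; apply/ltP.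
have hm' : INR m <= INR rho / 2.
  by move/leP/le_INR: hm; rewrite mult_INR /=; lra.
apply: Rle_trans (_ : Rpower 2 alpha * Rpower (INR rho / 2) beta <= _).
  by apply: Rmult_le_compat_l; [exact: Rlt_le (exp_pos _) | apply: Rle_Rpower_l; lra].
rewrite /Rpower /Rdiv ln_mult; [|lra|by apply: Rinv_0_lt_compat; lra].
rewrite ln_Rinv; last lra.
by rewrite -!exp_plus; right; congr exp; ring.
Qed.

Section Expectation.
Variables (H C : finType) (CD : {set H} -> {set C}) (D : C -> {set H}).
Variables (b rho : nat) (alpha beta l : R).
Hypothesis Hn : (0 < #|H|)%N.
Hypothesis Hdim : dim_bound CD b.
Hypothesis Hcomp : complies CD D.
Hypothesis Hbeta : 1 <= beta.
Hypothesis Hu : forall m : nat,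
  INR (local_growth CD m) <= Rpower 2 alpha * rpow0 (INR m) beta.
Hypothesis Hrho : (4 * b <= rho)%N.
Hypothesis Hrho0 : (0 < rho)%N.

Local Notation n := #|H|.
Local Notation t := (rho %/ 2)%N.

Definition is_heavy (s : C) : bool :=
  if Rle_dec (l * INR n / INR rho) (INR #|conflict_list CD D s|) then true else false.

Lemma sum_card_heavy_cells :
  (\sum_(x : {ffun 'I_rho -> H}) #|heavy_cells CD D rho l (sample_set x)|)%N
  = (\sum_(s | is_heavy s) sample_hits CD s rho)%N.
Proof.
rewrite [RHS]big_mkcond /=.
transitivity (\sum_(s : C) #|[set x : {ffun 'I_rho -> H} |
                              (s \in CD (sample_set x)) && is_heavy s]|)%N.
  rewrite -(sum_card_exchange (fun x s => (s \in CD (sample_set x)) && is_heavy s)).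
  by apply: eq_bigr => x _; apply: eq_card => s; rewrite !inE.
apply: eq_bigr => s _; case: (is_heavy s).
  by apply: eq_card => x; rewrite !inE andbT.
by apply/eqP; rewrite cards_eq0; apply/eqP/setP => x; rewrite !inE andbF.
Qed.

Lemma heavy_sample_hits_le s : is_heavy s ->
  INR (sample_hits CD s rho)
  <= 3 ^ b * INR n ^ (rho - t) * exp (- l / 2) * INR (sample_hits CD s t).
Proof.
move=> heavy; have Kn : (#|conflict_list CD D s| <= n)%N by apply: max_card.
apply: Rle_trans (le_INR _ _ (leP (sample_hits_half Hdim Hcomp s Hrho))) _.
rewrite !mult_INR !INR_expn INR_subn //.
apply: Rmult_le_compat_r; first exact: pos_INR.
have -> : INR 3 = 3 by rewrite /=; ring.
rewrite Rmult_assoc; apply: Rmult_le_compat_l; first by apply: pow_le; lra.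
apply: (heavy_pow_le_exp (r := INR rho)).
- by apply: lt_0_INR; apply/ltP.
- by split; [exact: pos_INR | apply: le_INR; apply/leP].
- by apply: lt_0_INR; apply/ltP.
- by move: heavy; rewrite /is_heavy; case: (Rle_dec _ _).
- by rewrite -[2]/(INR 2) -mult_INR; apply: le_INR; apply/leP; lia.
Qed.

Lemma sum_sample_hits_le :
  INR (\sum_(s : C) sample_hits CD s t)
  <= Rpower 2 (alpha - beta) * Rpower (INR rho) beta * INR n ^ t.
Proof.
have -> : (\sum_(s : C) sample_hits CD s t
           = \sum_(y : {ffun 'I_t -> H}) #|[set s | s \in CD (sample_set y)]|)%N.
  rewrite (sum_card_exchange (fun y s => s \in CD (sample_set y))).
  by apply: eq_bigr => s _; apply: eq_card => y; rewrite !inE.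
rewrite -INR_expn.
have -> : (n ^ t)%N = (\sum_(y : {ffun 'I_t -> H}) 1)%N by rewrite sum1_card card_ffun card_ord.
apply: INR_sum_le => [|y _]; first by apply: Rmult_le_pos; apply: Rlt_le; exact: exp_pos.
rewrite Rmult_1_r; apply: Rle_trans (_ : INR (local_growth CD #|sample_set y|) <= _).
  apply: le_INR; apply/leP; rewrite (eq_card (B := CD (sample_set y))) => [|s]; last by rewrite inE.
  exact: (leq_bigmax_cond (P := fun I : {set H} => #|I| == #|sample_set y|)).
apply: Rle_trans (Hu _) _; apply: growth_bound_half => //.
apply: (@leq_trans (2 * t)); first by rewrite leq_mul2l card_sample_set orbT.
by rewrite mulnC leq_divM.
Qed.

Lemma sum_heavy_sample_hits_le :
  INR (\sum_(s | is_heavy s) sample_hits CD s rho)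
  <= 3 ^ b * INR n ^ (rho - t) * exp (- l / 2)
     * (Rpower 2 (alpha - beta) * Rpower (INR rho) beta * INR n ^ t).
Proof.
have c0 : 0 <= 3 ^ b * INR n ^ (rho - t) * exp (- l / 2).
  have := pos_INR n; have := exp_pos (- l / 2) => *.
  by apply: Rmult_le_pos; [apply: Rmult_le_pos; apply: pow_le | ]; lra.
apply: Rle_trans (INR_sum_le (G := fun s => sample_hits CD s t) c0 heavy_sample_hits_le) _.
apply: Rmult_le_compat_l => //; apply: Rle_trans _ sum_sample_hits_le.
by apply: le_INR; apply/leP; rewrite [X in (_ <= X)%N](bigID is_heavy) leq_addr.
Qed.

End Expectation.

Theorem mainTheorem2 (H C : finType) (CD : {set H} -> {set C})
    (D : C -> {set H}) (b rho : nat) (alpha beta l : R)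
    (Hn : (0 < #|H|)%N)
    (Hb : comb_dim CD b)
    (HD : forall (I : {set H}) (s : C), s \in CD I -> is_defining_set CD s (D s))
    (Hcomp : complies CD D)
    (Hbeta : 1 <= beta)
    (Hu : forall m : nat,
        INR (local_growth CD m) <= Rpower 2 alpha * rpow0 (INR m) beta)
    (Hrho : (4 * b <= rho)%N)
    (Hl : 1 < l) :
  expected_heavy CD D rho l
     <= 3 ^ b * Rpower 2 (alpha - beta) * Rpower (INR rho) beta * exp (- l / 2).
Proof.
have [b0 Hdim _] := Hb.
have rho0 : (0 < rho)%N by lia.
have split_rho : (#|H| ^ rho = #|H| ^ (rho %/ 2) * #|H| ^ (rho - rho %/ 2))%N.
  by rewrite -expnD subnKC // leq_div.
have npos : 0 < INR #|H| ^ (rho %/ 2) * INR #|H| ^ (rho - rho %/ 2).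
  by apply: Rmult_lt_0_compat; apply: pow_lt; apply: lt_0_INR; apply/ltP.
rewrite /expected_heavy sum_card_heavy_cells split_rho mult_INR !INR_expn.
apply: (Rmult_le_reg_r _ _ _ npos); rewrite /Rdiv Rmult_assoc Rinv_l ?Rmult_1_r; last lra.
apply: Rle_trans (sum_heavy_sample_hits_le l Hn Hdim Hcomp Hbeta Hu Hrho rho0) _.
by right; rewrite /Rdiv; ring.
Qed.
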